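(* Let $Q:(-\infty,-1)\to(-\infty,0)$ be the inverse of the strictly increasing function $G\mapsto G-e^G$ on $(-\infty,0)$, and define $R:\mathbb{R}\to\mathbb{R}$ by $R(V)=-2(1-e^{Q(V)})^2$ for $V<-1$ and $R(V)=4(V+1)$ for $V\ge -1$. For each $m<-1$ let $n(m)>0$ be the unique number such that the solution of the initial value problem $V''-3V'=R(V)$, $V(0)=m$, $V'(0)=-n(m)$ (prime denoting $d/ds$) is negative-valued and solves the two-point boundary value problem $V''-3V'=R(V)$ on $(-\infty,\infty)$, $V(-\infty)=-1$, $V(\infty)=-\infty$. Then the correct shooting slope $-n(m)<0$ depends on $m$ continuously and monotonically, so that $n(m_1)>n(m_2)>0$ whenever $m_1<m_2<-1$.
   Context: Existence and uniqueness of $n(m)$ for each $m<-1$ is established in the paper; the claim concerns the resulting function $m\mapsto n(m)$ on $(-\infty,-1)$. *)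

From Stdlib Require Import Reals Lra ClassicalEpsilon.
From Coquelicot Require Import Coquelicot.
Open Scope R_scope.

(* Q : (-oo,-1) -> (-oo,0), inverse of G |-> G - exp G on (-oo,0).
   For v < -1 this picks the (unique) G < 0 with G - exp G = v;
   outside the domain its value is irrelevant. *)
Definition Qinv (v : R) : R :=
  epsilon (inhabits 0) (fun G => G < 0 /\ G - exp G = v).

Definition Rfun (V : R) : R :=
  if Rlt_dec V (-1) then -2 * (1 - exp (Qinv V)) ^ 2 else 4 * (V + 1).

(* [good m n]: the solution of V'' - 3V' = R(V), V(0) = m, V'(0) = -n
   is defined on all of R, is negative-valued, and satisfies
   V(-oo) = -1, V(+oo) = -oo.  (The IVP has a unique solution since R is C^1,
   so "there exists a solution with these properties" is the same as
   "the solution has these properties".) *)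
Definition good (m n : R) : Prop :=
  exists V V' : R -> R,
    (forall s, is_derive V s (V' s)) /\
    (forall s, is_derive V' s (3 * V' s + Rfun (V s))) /\
    V 0 = m /\ V' 0 = - n /\
    (forall s, V s < 0) /\
    is_lim V m_infty (-1) /\
    is_lim V p_infty m_infty.

(** The whole family of boundary-value solutions is one trajectory seen from
    different origins: if [V] is the solution for [m = -2], then for every [t]
    the time-shift [u |-> V (u + t)] is a solution with [V(0) = V t], so by
    uniqueness [n (V t) = - V' t].  Along this trajectory [V <= -1]
    (a maximum above [-1] would contradict the monotonicity of
    [e^{-3s} V'], whose derivative is [e^{-3s} R(V)]), hence [e^{-3s} V'] is
    nonincreasing, [V'] is negative and strictly decreasing once [V < -1],
    and [V] is a continuous strictly decreasing bijection onto [(-oo,-1)].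
    Thus [n = -V' o V^{-1}] is continuous and strictly decreasing. *)

From Stdlib Require Import Reals Lra.
From Coquelicot Require Import Coquelicot.
Open Scope R_scope.

Lemma MVT_is_derive (f df : R -> R) (a b : R) :
  (forall x, is_derive f x (df x)) -> a < b ->
  exists c, a < c < b /\ f b - f a = df c * (b - a).
Proof.
  intros Hf Hab.
  destruct (MVT_cor2 f df a b Hab) as [c [Hc Hbc]].
  - intros c _. apply is_derive_Reals, Hf.
  - exists c. split; assumption.
Qed.

Lemma is_derive_global_max (f : R -> R) (df c : R) :
  is_derive f c df -> (forall t, f t <= f c) -> df = 0.
Proof.
  intros Hf Hmax.
  exact (deriv_maximum f (c - 1) (c + 1) c (exist _ df (proj1 (is_derive_Reals _ _ _) Hf))
           ltac:(lra) ltac:(lra) (fun t _ _ => Hmax t)).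
Qed.

Lemma continuous_open_near (f : R -> R) (x : R) (P : R -> Prop) :
  continuous f x -> open P -> P (f x) ->
  exists d : posreal, forall t, Rabs (t - x) < d -> P (f t).
Proof.
  intros Hf HP Hx.
  destruct (Hf _ (HP (f x) Hx)) as [d Hd].
  exists d. intros t Ht. exact (Hd t Ht).
Qed.

Lemma is_lim_shift (f : R -> R) (x l : Rbar) (t : R) :
  is_lim f x l -> is_lim (fun u => f (u + t)) (Rbar_minus x t) l.
Proof.
  intros Hf. apply (is_lim_comp f (fun u => u + t) _ l x); [exact Hf| |].
  - apply (is_lim_plus _ _ _ (Rbar_minus x t) (Finite t));
      [apply is_lim_id|apply is_lim_const|].
    destruct x; simpl; try easy. apply (f_equal (fun r => Some (Finite r))). ring.
  - destruct x; simpl.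
    + exists (mkposreal _ Rlt_0_1). intros y _ Hy H. injection H. intro. lra.
    + exists 0. intros. discriminate.
    + exists 0. intros. discriminate.
Qed.

Lemma is_derive_shift (f df : R -> R) (t : R) :
  (forall s, is_derive f s (df s)) ->
  forall u, is_derive (fun u => f (u + t)) u (df (u + t)).
Proof.
  intros Hf u.
  assert (Hshift : is_derive (fun x => x + t) u 1) by (auto_derive; auto).
  pose proof (is_derive_comp f (fun x => x + t) u _ _ (Hf (u + t)) Hshift) as H.
  unfold scal in H; simpl in H; unfold mult in H; simpl in H.
  rewrite Rmult_1_l in H. exact H.
Qed.

Lemma max_of_lim_above (f : R -> R) (l a : R) :
  continuity f -> is_lim f m_infty l -> is_lim f p_infty m_infty -> l < f a ->
  exists c, forall t, f t <= f c.
Proof.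
  intros Hf Hl Hr Ha.
  destruct (proj2 (is_lim_spec _ _ _) Hl (mkposreal _ (proj2 (Rlt_0_minus _ _) Ha))) as [A HA].
  destruct (proj2 (is_lim_spec _ _ _) Hr (f a)) as [B HB]; simpl in HA.
  set (A' := Rmin A a - 1). set (B' := Rmax B a + 1).
  assert (HA' : A' < A /\ A' < a) by (unfold A', Rmin; destruct Rle_dec; lra).
  assert (HB' : B < B' /\ a < B') by (unfold B', Rmax; destruct Rle_dec; lra).
  destruct (continuity_ab_maj f A' B' ltac:(lra) (fun c _ => Hf c)) as [c [Hmax Hc]].
  assert (Hac : f a <= f c) by (apply Hmax; lra).
  exists c. intros t.
  destruct (Rlt_or_le t A') as [Ht|Ht]; [|destruct (Rlt_or_le B' t) as [Ht'|Ht']].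
  - specialize (HA t ltac:(lra)). apply Rabs_def2 in HA. lra.
  - specialize (HB t ltac:(lra)). lra.
  - apply Hmax. lra.
Qed.

Lemma continuous_comp_inverse (V f g : R -> R) (a b t0 : R) :
  continuity V -> a < t0 < b ->
  (forall s u, a <= s -> s < u -> u <= b -> V u < V s) ->
  (forall t, a <= t <= b -> g (V t) = f t) ->
  continuous f t0 -> continuous g (V t0).
Proof.
  intros HV Ht0 Hdec Hgf Hf.
  apply filterlim_locally. intros eps.
  destruct (proj1 (filterlim_locally _ _) Hf eps) as [d Hd].
  set (a' := Rmax a (t0 - d / 2)). set (b' := Rmin b (t0 + d / 2)).
  pose proof (cond_pos d).
  assert (Ha' : a <= a' < t0 /\ t0 - d < a')
    by (unfold a', Rmax; destruct Rle_dec; lra).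
  assert (Hb' : t0 < b' <= b /\ b' < t0 + d)
    by (unfold b', Rmin; destruct Rle_dec; lra).
  assert (Va' : V t0 < V a') by (apply Hdec; lra).
  assert (Vb' : V b' < V t0) by (apply Hdec; lra).
  assert (Hdelta : 0 < Rmin (V a' - V t0) (V t0 - V b')) by (apply Rmin_pos; lra).
  exists (mkposreal _ Hdelta). intros y Hy.
  change (Rabs (y - V t0) < Rmin (V a' - V t0) (V t0 - V b')) in Hy.
  pose proof (Rmin_l (V a' - V t0) (V t0 - V b')).
  pose proof (Rmin_r (V a' - V t0) (V t0 - V b')).
  apply Rabs_def2 in Hy.
  destruct (IVT_gen V a' b' y HV) as [t [Ht <-]].
  { rewrite Rmin_right, Rmax_left by lra. lra. }
  rewrite Rmin_left, Rmax_right in Ht by lra.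
  rewrite !Hgf by lra. apply Hd.
  change (Rabs (t - t0) < d). apply Rabs_def1; lra.
Qed.

Lemma Rfun_nonpos (v : R) : v <= -1 -> Rfun v <= 0.
Proof.
  intros Hv. unfold Rfun. destruct (Rlt_dec v (-1)).
  - pose proof (pow2_ge_0 (1 - exp (Qinv v))). lra.
  - lra.
Qed.

Lemma Rfun_gt_m1 (v : R) : -1 < v -> Rfun v = 4 * (v + 1).
Proof. intros Hv. unfold Rfun. destruct (Rlt_dec v (-1)); lra. Qed.

Section Trajectory.

Variables V V' : R -> R.
Hypothesis HV : forall s, is_derive V s (V' s).
Hypothesis HV' : forall s, is_derive V' s (3 * V' s + Rfun (V s)).
Hypothesis HVlim_m : is_lim V m_infty (-1).
Hypothesis HVlim_p : is_lim V p_infty m_infty.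

(* [exp (-3 s)] is an integrating factor for [V'' - 3 V']. *)
Let Z s := exp (-3 * s) * V' s.

Lemma is_derive_Z s : is_derive Z s (exp (-3 * s) * Rfun (V s)).
Proof.
  assert (He : is_derive (fun s => exp (-3 * s)) s (-3 * exp (-3 * s)))
    by (auto_derive; auto; ring).
  pose proof (is_derive_mult _ _ s _ _ He (HV' s) Rmult_comm) as H.
  unfold plus, mult in H; simpl in H.
  replace (exp (-3 * s) * Rfun (V s)) with
    (-3 * exp (-3 * s) * V' s + exp (-3 * s) * (3 * V' s + Rfun (V s))) by ring.
  exact H.
Qed.

Lemma traj_continuity : continuity V.
Proof.
  intros s. apply continuity_pt_filterlim.
  exact (ex_derive_continuous V s (ex_intro _ _ (HV s))).
Qed.

Lemma traj_le_m1 s : V s <= -1.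
Proof.
  destruct (Rle_or_lt (V s) (-1)) as [|Hs]; [assumption|exfalso].
  destruct (max_of_lim_above V (-1) s traj_continuity HVlim_m HVlim_p Hs) as [c Hmax].
  pose proof (is_derive_global_max V _ c (HV c) Hmax) as HV'c.
  assert (Hc : continuous V c) by (apply continuity_pt_filterlim, traj_continuity).
  destruct (continuous_open_near V c _ Hc (open_gt (-1)) ltac:(pose proof (Hmax s); lra))
    as [d Hd].
  pose proof (cond_pos d).
  (* [Z c = 0] and [Z] increases right of [c], so [V] increases there. *)
  assert (HV'pos : forall t, c < t < c + d -> 0 < V' t).
  { intros t Ht.
    destruct (MVT_is_derive Z _ c t is_derive_Z ltac:(lra)) as [x [Hx HZ]].
    rewrite Rfun_gt_m1 in HZ by (apply Hd, Rabs_def1; lra).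
    assert (-1 < V x) by (apply Hd, Rabs_def1; lra).
    pose proof (exp_pos (-3 * x)). pose proof (exp_pos (-3 * t)).
    unfold Z in HZ. rewrite HV'c in HZ.
    assert (0 < exp (-3 * x) * (4 * (V x + 1)) * (t - c))
      by (repeat apply Rmult_lt_0_compat; lra).
    nra. }
  destruct (MVT_is_derive V V' c (c + d / 2) HV ltac:(lra)) as [x [Hx HVx]].
  pose proof (HV'pos x ltac:(lra)). pose proof (Hmax (c + d / 2)). nra.
Qed.

Lemma Z_nonincreasing x y : x <= y -> Z y <= Z x.
Proof.
  intros Hxy. destruct (Req_dec x y) as [->|Hne]; [lra|].
  destruct (MVT_is_derive Z _ x y is_derive_Z ltac:(lra)) as [c [Hc HZ]].
  pose proof (exp_pos (-3 * c)).
  pose proof (Rfun_nonpos (V c) (traj_le_m1 c)).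
  assert (exp (-3 * c) * Rfun (V c) <= 0) by nra.
  nra.
Qed.

Lemma traj_slope_neg s : V s < -1 -> V' s < 0.
Proof.
  intros Hs. destruct (Rlt_or_le (V' s) 0) as [|Hpos]; [assumption|exfalso].
  destruct (proj2 (is_lim_spec _ _ _) HVlim_m (mkposreal (-1 - V s) ltac:(lra))) as [M HM].
  set (x := Rmin M s - 1).
  assert (Hx : x < M /\ x < s)
    by (unfold x; pose proof (Rmin_l M s); pose proof (Rmin_r M s); lra).
  specialize (HM x (proj1 Hx)). simpl in HM. apply Rabs_def2 in HM.
  destruct (MVT_is_derive V V' x s HV (proj2 Hx)) as [c [Hc HVc]].
  (* [Z c >= Z s >= 0], so [V] did not decrease on [x, s]. *)
  pose proof (Z_nonincreasing c s ltac:(lra)).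
  unfold Z in *. pose proof (exp_pos (-3 * c)). pose proof (exp_pos (-3 * s)).
  assert (0 <= V' c) by nra.
  nra.
Qed.

Lemma traj_slope_decreasing s u : V s < -1 -> s < u -> V' u < V' s.
Proof.
  intros Hs Hsu.
  pose proof (traj_slope_neg s Hs).
  pose proof (Z_nonincreasing s u ltac:(lra)).
  unfold Z in *.
  assert (Hexp : forall r x, x = exp (3 * r) * (exp (-3 * r) * x)).
  { intros r x. rewrite <- Rmult_assoc, <- exp_plus.
    replace (3 * r + -3 * r) with 0 by ring. rewrite exp_0. ring. }
  assert (exp (3 * s) < exp (3 * u)) by (apply exp_increasing; lra).
  assert (exp (-3 * s) * V' s < 0) by (pose proof (exp_pos (-3 * s)); nra).
  rewrite (Hexp u (V' u)), (Hexp s (V' s)).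
  pose proof (exp_pos (3 * s)).
  nra.
Qed.

Lemma traj_decreasing s u : V s < -1 -> s < u -> V u < V s.
Proof.
  intros Hs Hsu.
  destruct (MVT_is_derive V V' s u HV Hsu) as [c [Hc HVc]].
  pose proof (traj_slope_neg s Hs).
  pose proof (traj_slope_decreasing s c Hs ltac:(lra)).
  nra.
Qed.

Lemma traj_lt_m1_after s t : V s < -1 -> s <= t -> V t < -1.
Proof.
  intros Hs Hst. destruct (Req_dec s t) as [<-|Hne]; [assumption|].
  pose proof (traj_decreasing s t Hs ltac:(lra)). lra.
Qed.

Lemma traj_decreasing_after s x y : V s < -1 -> s <= x -> x < y -> V y < V x.
Proof. intros Hs Hsx. apply traj_decreasing, (traj_lt_m1_after s); assumption. Qed.

Lemma traj_lt_m1_before t : V t < -1 -> exists s, s < t /\ V s < -1.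
Proof.
  intros Ht.
  assert (Hc : continuous V t) by (apply continuity_pt_filterlim, traj_continuity).
  destruct (continuous_open_near V t _ Hc (open_lt (-1)) Ht) as [d Hd].
  pose proof (cond_pos d).
  exists (t - d / 2). split; [lra|].
  apply Hd, Rabs_def1; lra.
Qed.

Lemma traj_surjective m : m < -1 -> exists t, V t = m.
Proof.
  intros Hm.
  destruct (proj2 (is_lim_spec _ _ _) HVlim_m (mkposreal (-1 - m) ltac:(lra))) as [A HA].
  destruct (proj2 (is_lim_spec _ _ _) HVlim_p m) as [B HB].
  specialize (HA (A - 1) ltac:(lra)). simpl in HA. apply Rabs_def2 in HA.
  specialize (HB (B + 1) ltac:(lra)).
  destruct (IVT_gen V (A - 1) (B + 1) m traj_continuity) as [t [_ Ht]].
  - unfold Rmin, Rmax; destruct Rle_dec; lra.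
  - exists t. exact Ht.
Qed.

Lemma good_traj_shift : (forall s, V s < 0) -> forall t, good (V t) (- V' t).
Proof.
  intros Hneg t.
  exists (fun u => V (u + t)), (fun u => V' (u + t)).
  refine (conj _ (conj _ (conj _ (conj _ (conj _ (conj _ _)))))).
  - exact (is_derive_shift V V' t HV).
  - exact (is_derive_shift V' (fun s => 3 * V' s + Rfun (V s)) t HV').
  - now rewrite Rplus_0_l.
  - now rewrite Rplus_0_l, Ropp_involutive.
  - intros s. apply Hneg.
  - exact (is_lim_shift V m_infty (-1) t HVlim_m).
  - exact (is_lim_shift V p_infty m_infty t HVlim_p).
Qed.

End Trajectory.

Theorem lemma4p7 (n : R -> R)
  (hn : forall m, m < -1 ->
          0 < n m /\ good m (n m) /\
          (forall n', 0 < n' -> good m n' -> n' = n m)) :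
  (forall m, m < -1 -> continuous n m) /\
  (forall m1 m2, m1 < m2 -> m2 < -1 -> n m1 > n m2 /\ n m2 > 0).
Proof.
  destruct (hn (-2) ltac:(lra))
    as [_ [[V [V' [HV [HV' [_ [_ [Hneg [Hlm Hlp]]]]]]]] _]].
  assert (Hn : forall t, V t < -1 -> n (V t) = - V' t).
  { intros t Ht. destruct (hn (V t) Ht) as [_ [_ Huniq]]. symmetry. apply Huniq.
    - pose proof (traj_slope_neg V V' HV HV' Hlm Hlp t Ht). lra.
    - apply good_traj_shift; assumption. }
  split.
  - intros m Hm. destruct (traj_surjective V V' HV Hlm Hlp m Hm) as [t0 <-].
    destruct (traj_lt_m1_before V V' HV t0 Hm) as [a [Hat Ha]].
    apply (continuous_comp_inverse V (fun t => - V' t) n a (t0 + 1) t0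
             (traj_continuity V V' HV) ltac:(lra)).
    + intros s u Has Hsu _.
      exact (traj_decreasing_after V V' HV HV' Hlm Hlp a s u Ha Has Hsu).
    + intros t Ht. apply Hn, (traj_lt_m1_after V V' HV HV' Hlm Hlp a); [exact Ha|lra].
    + exact (ex_derive_continuous _ t0 (ex_derive_opp V' t0 (ex_intro _ _ (HV' t0)))).
  - intros m1 m2 H12 H2.
    split; [|apply (hn m2 H2)].
    destruct (traj_surjective V V' HV Hlm Hlp m1 ltac:(lra)) as [t1 <-].
    destruct (traj_surjective V V' HV Hlm Hlp m2 H2) as [t2 <-].
    assert (Ht21 : t2 < t1).
    { destruct (Rlt_or_le t2 t1) as [|Hle]; [assumption|].
      destruct (Req_dec t1 t2) as [->|Hne]; [lra|].
      pose proof (traj_decreasing V V' HV HV' Hlm Hlp t1 t2 ltac:(lra) ltac:(lra)). lra. }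
    pose proof (traj_slope_decreasing V V' HV HV' Hlm Hlp t2 t1 H2 Ht21).
    rewrite !Hn by lra. lra.
Qed.
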